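(* Let $D$ be a finite digraph, let $k\ge 2$, and let $D_1,\dots,D_t$ be the strong components of $D$. Then $D$ is $k$-AW if and only if each $D_i$ is $k$-AW.
   Context: A digraph is strongly connected if for any two vertices $v,w$ there is a directed walk from $v$ to $w$ and one from $w$ to $v$. A strong component of $D$ is a maximal strongly connected subdigraph (an induced subdigraph); the vertex sets of the strong components partition $V(D)$. The $k$-lights out game on a digraph $D$ ($k\ge 2$): start with a labeling $\lambda:V(D)\to\mathbb{Z}_k$. Toggling a vertex $v$ increases by $1$ (mod $k$) the label of $v$ and of every vertex $w$ with $vw\in A(D)$. The game is won when every vertex has label $0$. A labeling is $k$-winnable if some finite sequence of toggles wins the game starting from it; $D$ is $k$-Always Winnable ($k$-AW) if every labeling $V(D)\to\mathbb{Z}_k$ is $k$-winnable. *)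

From mathcomp Require Import all_boot all_order all_algebra.
Set Implicit Arguments. Unset Strict Implicit. Unset Printing Implicit Defensive.
Import GRing.Theory.
Local Open Scope ring_scope.

(* A finite digraph is a finite vertex type V with an arc relation arc : rel V
   (arc v w means vw is an arc). *)

Definition toggle (k : nat) (V : finType) (arc : rel V)
    (lam : V -> 'Z_k) (v : V) : V -> 'Z_k :=
  fun w => if (w == v) || arc v w then lam w + 1 else lam w.

Definition winnable (k : nat) (V : finType) (arc : rel V) (lam : V -> 'Z_k) : Prop :=
  exists s : seq V, forall w, foldl (toggle arc) lam s w = 0.

Definition always_winnable (k : nat) (V : finType) (arc : rel V) : Prop :=
  forall lam : V -> 'Z_k, winnable arc lam.

Definition strong_comp (V : finType) (arc : rel V) (x : V) : {set V} :=
  [set y | connect arc x y && connect arc y x].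

Definition induced_arc (V : finType) (arc : rel V) (S : {set V}) :
    rel {y : V | y \in S} :=
  fun a b => arc (val a) (val b).
Arguments induced_arc {V} arc S.

From mathcomp Require Import all_boot all_order all_algebra.
From mathcomp Require Import zify.
Set Implicit Arguments. Unset Strict Implicit. Unset Printing Implicit Defensive.
Import GRing.Theory.
Local Open Scope ring_scope.

(* Toggles commute, so the outcome of a toggle sequence only
   depends on how often (mod k) each vertex is toggled: a count vector
   c : V -> 'Z_k adds to the label of w the "effect" of c at w, the sum of c v
   over the closed in-neighbourhood of w.  Hence D is k-AW iff the effect map
   on 'Z_k^V is onto; we localise this to any vertex set T ("T is solvable")
   and, T being finite, onto is equivalent to one-to-one.
   If S is a subset of T that no arc leaves inside T ("out-closed"), then the
   effect matrix of T is block triangular, so T is solvable iff both S and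
   T :\: S are.  The strong component of x is R :\: R', with R the vertices
   reachable from x and R' those of R not reaching back to x, both out-closed:
   this gives the direct implication.  Conversely, a nonempty union T of strong
   components contains a "sink" component which is out-closed in T, and we
   peel it off by induction on #|T|. *)

Lemma surjF_inj (T : finType) (f : T -> T) :
  (forall y, exists x, f x = y) -> injective f.
Proof.
move=> surj; have surjb y : exists x, f x == y by have [x <-] := surj y; exists x.
pose g y := xchoose (surjb y).
have gK : cancel g f by move=> y; apply/eqP; exact: (xchooseP (surjb y)).
have [h _ hg] := injF_bij (can_inj gK).
have fh x : f x = h x by rewrite -{1}(hg x) gK.
by move=> x1 x2; rewrite !fh; apply: (can_inj hg).
Qed.

Section Effect.
Variables (k : nat) (V : finType) (arc : rel V).

Definition closed_nbhd (v w : V) : bool := (w == v) || arc v w.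

Definition effect (T : {set V}) (c : V -> 'Z_k) (w : V) : 'Z_k :=
  \sum_(v in T | closed_nbhd v w) c v.

Definition solvable (T : {set V}) : Prop := forall t : V -> 'Z_k,
  exists c : V -> 'Z_k, forall w, w \in T -> effect T c w = t w.

Definition nonsingular (T : {set V}) : Prop := forall c : V -> 'Z_k,
  (forall w, w \in T -> effect T c w = 0) -> forall v, v \in T -> c v = 0.

Definition out_closed (T S : {set V}) : Prop := S \subset T /\
  forall v w, v \in S -> w \in T -> arc v w -> w \in S.

Lemma effect_ext (T : {set V}) (c c' : V -> 'Z_k) (w : V) :
  {in T, c =1 c'} -> effect T c w = effect T c' w.
Proof. by move=> eqc; apply: eq_bigr => v /andP [/eqc]. Qed.

Lemma effect0 (T : {set V}) (c : V -> 'Z_k) (w : V) :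
  {in T, c =1 fun=> 0} -> effect T c w = 0.
Proof. by move=> c0; apply: big1 => v /andP [/c0]. Qed.

Lemma effectB (T : {set V}) (c1 c2 : V -> 'Z_k) (w : V) :
  effect T (fun v => c1 v - c2 v) w = effect T c1 w - effect T c2 w.
Proof. exact: sumrB. Qed.

Lemma effect_split (T S : {set V}) (c : V -> 'Z_k) (w : V) : S \subset T ->
  effect T c w = effect S c w + effect (T :\: S) c w.
Proof.
by move=> sST; rewrite /effect !big_mkcondr /= (big_setID S) /= (setIidPr sST).
Qed.

Lemma effect_outside (T S : {set V}) (c : V -> 'Z_k) (w : V) :
  out_closed T S -> w \in T -> w \notin S -> effect S c w = 0.
Proof.
move=> [_ clS] wT wS; apply: big1 => v /andP [vS].
case/orP => [/eqP wv | vw]; first by rewrite wv vS in wS.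
by rewrite (clS v w vS wT vw) in wS.
Qed.

Lemma effect_setT (c : V -> 'Z_k) (w : V) :
  effect setT c w = \sum_(v | closed_nbhd v w) c v.
Proof. by apply: eq_bigl => v; rewrite in_setT. Qed.

Definition effect_map (T : {set V}) (c : {ffun V -> 'Z_k}) : {ffun V -> 'Z_k} :=
  [ffun w => if w \in T then effect T c w else c w].

Lemma effect_mapE (T : {set V}) (c : {ffun V -> 'Z_k}) (w : V) :
  w \in T -> effect_map T c w = effect T c w.
Proof. by move=> wT; rewrite ffunE wT. Qed.

Lemma solvable_nonsingular (T : {set V}) : solvable T -> nonsingular T.
Proof.
move=> solT.
have inj_map : injective (effect_map T).
  apply: surjF_inj => y; have [c Hc] := solT y.
  exists [ffun v => if v \in T then c v else y v]; apply/ffunP => w.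
  rewrite ffunE; case: ifP => wT; last by rewrite ffunE wT.
  by rewrite -(Hc w wT); apply: effect_ext => v vT; rewrite ffunE vT.
move=> c c0 v vT.
have E : effect_map T [ffun u => if u \in T then c u else 0]
         = effect_map T [ffun=> 0].
  apply/ffunP => w; rewrite !ffunE; case: ifP => wT; last by rewrite wT.
  rewrite [RHS]effect0; last by move=> u _; rewrite ffunE.
  by rewrite -(c0 w wT); apply: effect_ext => u uT; rewrite ffunE uT.
by have /ffunP/(_ v) := inj_map _ _ E; rewrite !ffunE vT.
Qed.

Lemma nonsingular_solvable (T : {set V}) : nonsingular T -> solvable T.
Proof.
move=> nsT.
have inj_map : injective (effect_map T).
  move=> c1 c2 /ffunP E; apply/ffunP => v.
  case vT: (v \in T); last by have := E v; rewrite !ffunE vT.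
  apply/eqP; rewrite -subr_eq0; apply/eqP.
  apply: (nsT (fun v => c1 v - c2 v)) => // w wT.
  by rewrite effectB -!effect_mapE // E subrr.
have [h _ hK] := injF_bij inj_map.
move=> t; exists (h (finfun t)) => w wT.
by rewrite -effect_mapE // hK ffunE.
Qed.

Lemma solvable_diff (T S : {set V}) :
  solvable T -> out_closed T S -> solvable (T :\: S).
Proof.
move=> solT ocS t; have [c Hc] := solT t; exists c => w.
rewrite inE => /andP [wS wT]; case: (ocS) => sST _.
by rewrite -(Hc w wT) (effect_split c w sST) (effect_outside c ocS wT wS) add0r.
Qed.

Lemma solvable_sub (T S : {set V}) :
  solvable T -> out_closed T S -> solvable S.
Proof.
move=> solT ocS; case: (ocS) => sST _.
apply: nonsingular_solvable => c c0 v vS.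
pose cS u := if u \in S then c u else 0.
have cS0 w : w \in T -> effect T cS w = 0.
  move=> wT; rewrite (effect_split _ w sST) [effect (T :\: S) _ _]effect0; last first.
    by move=> u; rewrite inE /cS => /andP [/negbTE ->].
  case wS: (w \in S); last by rewrite (effect_outside _ ocS wT) ?wS ?addr0.
  by rewrite addr0 -(c0 w wS); apply: effect_ext => u uS; rewrite /cS uS.
have := solvable_nonsingular solT cS0 (subsetP sST v vS); by rewrite /cS vS.
Qed.

(* Conversely, T is solvable when S and T :\: S are: first solve T :\: S,
   then correct S, which cannot disturb T :\: S. *)
Lemma solvable_glue (T S : {set V}) :
  out_closed T S -> solvable S -> solvable (T :\: S) -> solvable T.
Proof.
move=> ocS solS solD t; case: (ocS) => sST _.
have [c2 H2] := solD t.
have [c1 H1] := solS (fun w => t w - effect (T :\: S) c2 w).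
exists (fun v => if v \in S then c1 v else c2 v) => w wT.
rewrite (effect_split _ w sST) [effect (T :\: S) _ _](@effect_ext _ _ c2); last first.
  by move=> v; rewrite inE => /andP [/negbTE ->].
case wS: (w \in S).
  by rewrite (@effect_ext S _ c1) ?H1 ?subrK // => v ->.
by rewrite (effect_outside _ ocS wT) ?wS // add0r H2 // inE wS.
Qed.

End Effect.

Section Toggles.
Variables (k : nat) (V : finType) (arc : rel V).

Lemma toggles_effect (s : seq V) (lam : V -> 'Z_k) :
  exists c : V -> 'Z_k, forall w,
    foldl (toggle arc) lam s w = lam w + effect arc setT c w.
Proof.
elim: s lam => [|u s IH] lam /=.
  by exists (fun=> 0) => w; rewrite effect0 ?addr0.
have [c Hc] := IH (toggle arc lam u).
exists (fun v => c v + (v == u)%:R) => w; rewrite Hc /effect big_split /=.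
have -> : \sum_(v in setT | closed_nbhd arc v w) ((v == u)%:R : 'Z_k)
          = (closed_nbhd arc u w)%:R.
  rewrite big_mkcond (bigD1 u) //= in_setT eqxx big1 ?addr0.
    by case: (closed_nbhd arc u w).
  by move=> v /negbTE ->; case: ifP.
rewrite /toggle /closed_nbhd; case: ifP => _ /=; by rewrite ?addr0 // -addrA [1 + _]addrC.
Qed.

Lemma toggle_nseq (n : nat) (v : V) (lam : V -> 'Z_k) (w : V) :
  foldl (toggle arc) lam (nseq n v) w = lam w + (closed_nbhd arc v w)%:R *+ n.
Proof.
elim: n lam => [|n IH] lam /=; first by rewrite addr0.
by rewrite IH /toggle /closed_nbhd mulrS; case: ifP => _ /=; rewrite ?add0r ?addrA.
Qed.

Lemma realise_counts (c : V -> 'Z_k) (r : seq V) :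
  exists s, forall lam w,
    foldl (toggle arc) lam s w = lam w + \sum_(v <- r | closed_nbhd arc v w) c v.
Proof.
elim: r => [|u r [s Hs]]; first by exists [::] => lam w; rewrite big_nil addr0.
exists (nseq (c u) u ++ s) => lam w.
rewrite foldl_cat Hs toggle_nseq big_cons -addrA; congr (_ + _).
rewrite -mulr_natl natr_Zp.
by case: (closed_nbhd arc u w); rewrite /= ?mulr1 ?mulr0 ?add0r.
Qed.

Lemma always_winnable_solvable : always_winnable k arc <-> solvable k arc setT.
Proof.
split=> [AW t | solV lam].
  have [s Hs] := AW (fun w => - t w); have [c Hc] := toggles_effect s (fun w => - t w).
  exists c => w _; apply/eqP; rewrite -subr_eq0 -[_ - _]addrC -Hc Hs //.
have [c Hc] := solV (fun w => - lam w); have [s Hs] := realise_counts c (enum V).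
exists s => w; rewrite Hs big_enum_cond /= -effect_setT.
by rewrite Hc ?in_setT // subrr.
Qed.

End Toggles.

Section Induced.
Variables (k : nat) (V : finType) (arc : rel V) (C : {set V}).

Lemma sum_induced (P : pred V) (F : V -> 'Z_k) :
  \sum_(v in C | P v) F v = \sum_(u : {y : V | y \in C} | P (val u)) F (val u).
Proof. by rewrite big_mkcondr /= big_sub /= -big_mkcond. Qed.

Lemma closed_nbhd_induced (u u' : {y : V | y \in C}) :
  closed_nbhd (induced_arc arc C) u' u = closed_nbhd arc (val u') (val u).
Proof. by rewrite /closed_nbhd /induced_arc -val_eqE. Qed.

Lemma induced_always_winnable :
  always_winnable k (induced_arc arc C) <-> solvable k arc C.
Proof.
rewrite always_winnable_solvable; split=> [solC t | solC t'].
  have [c' Hc] := solC (fun u => t (val u)).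
  exists (fun v => odflt 0 (omap c' (insub v))) => w wC.
  rewrite -(Hc (Sub w wC) (in_setT _)) effect_setT /effect sum_induced.
  by apply: eq_big => [u|u _]; rewrite ?closed_nbhd_induced ?valK.
have [c Hc] := solC (fun v => odflt 0 (omap t' (insub v))).
exists (fun u => c (val u)) => u _.
have := Hc (val u) (valP u); rewrite valK /= => <-.
rewrite effect_setT /effect sum_induced.
by apply: eq_bigl => u'; rewrite closed_nbhd_induced.
Qed.

End Induced.

Section Components.
Variables (k : nat) (V : finType) (arc : rel V).

Definition reach_in (T : {set V}) (x : V) : {set V} :=
  [set z in T | connect arc x z].

Definition comp_closed (T : {set V}) : Prop :=
  forall y z, y \in T -> z \in strong_comp arc y -> z \in T.

Lemma reach_in_refl (T : {set V}) (x : V) : x \in T -> x \in reach_in T x.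
Proof. by move=> xT; rewrite inE xT connect0. Qed.

Lemma reach_out_closed (T : {set V}) (x : V) : out_closed arc T (reach_in T x).
Proof.
split; first by apply/subsetP => z; rewrite inE => /andP [].
move=> v w; rewrite !inE => /andP [_ xv] -> vw /=.
exact: connect_trans xv (connect1 vw).
Qed.

Definition no_return (x : V) : {set V} :=
  [set y in reach_in setT x | ~~ connect arc y x].

(* Out-neighbours of a vertex that cannot return to x cannot return either. *)
Lemma no_return_out_closed (x : V) : out_closed arc (reach_in setT x) (no_return x).
Proof.
split; first by apply/subsetP => y; rewrite inE => /andP [].
move=> v w; rewrite !inE => /andP [xv nvx] xw vw; rewrite xw /=.
by apply: contra nvx; exact: connect_trans (connect1 vw).
Qed.

Lemma strong_comp_no_return (x : V) :
  strong_comp arc x = reach_in setT x :\: no_return x.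
Proof.
apply/setP => y; rewrite !inE.
by case: (connect arc x y); case: (connect arc y x).
Qed.

Lemma solvable_strong_comp (x : V) :
  solvable k arc setT -> solvable k arc (strong_comp arc x).
Proof.
move=> solV; rewrite strong_comp_no_return.
apply: solvable_diff (no_return_out_closed x).
exact: solvable_sub solV (reach_out_closed setT x).
Qed.

(* In a union T of strong components, a vertex x of T whose reachable part is
   smallest spans a sink component: what it reaches in T is its component. *)
Lemma sink_component (T : {set V}) (x0 : V) : comp_closed T -> x0 \in T ->
  exists2 x, x \in T & reach_in T x = strong_comp arc x.
Proof.
move=> clT x0T.
have [x xT xmin] := @arg_minnP _ x0 (mem T) (fun y => #|reach_in T y|) x0T.
have back z : z \in reach_in T x -> connect arc z x.
  move=> zR; have /setIdP [zT xz] := zR.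
  have sub : reach_in T z \subset reach_in T x.
    apply/subsetP => w; rewrite !inE => /andP [-> zw].
    exact: connect_trans xz zw.
  have /eqP E : reach_in T z == reach_in T x by rewrite eqEcard sub xmin.
  by move: (reach_in_refl xT); rewrite -E inE => /andP [].
exists x => //; apply/setP => z; apply/idP/idP => [zR | zC].
  by rewrite inE (back z zR); case/setIdP: zR => _ ->.
by move: (zC); rewrite !inE (clT x z xT zC) => /andP [].
Qed.

Lemma comp_closed_diff (T : {set V}) (x : V) :
  comp_closed T -> comp_closed (T :\: reach_in T x).
Proof.
move=> clT y z /setDP [yT yR] zC; rewrite inE (clT y z yT zC) andbT.
apply: contra yR; rewrite !inE => /andP [_ xz]; rewrite yT /=.
by move: zC; rewrite inE => /andP [_ zy]; exact: connect_trans xz zy.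
Qed.

(* Converse implication, for any union of strong components: peel off a
   sink component and induct on the number of vertices. *)
Lemma solvable_comp_closed (T : {set V}) :
  (forall x, solvable k arc (strong_comp arc x)) ->
  comp_closed T -> solvable k arc T.
Proof.
move=> solC; elim: {T}_.+1 {-2}T (ltnSn #|T|) => // n IH T cardT clT.
have [-> | [x0 x0T]] := set_0Vmem T; first by move=> t; exists t => w; rewrite inE.
have [x xT sinkx] := sink_component clT x0T.
apply: (solvable_glue (reach_out_closed T x)); first by rewrite sinkx.
apply: IH; last exact: comp_closed_diff.
rewrite cardsDS; last by case: (reach_out_closed T x).
have : (0 < #|reach_in T x|)%N by apply/card_gt0P; exists x; exact: reach_in_refl.
have : (0 < #|T|)%N by apply/card_gt0P; exists x.
by move: cardT; lia.
Qed.

End Components.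

Theorem mainTheorem3 (k : nat) (V : finType) (arc : rel V) :
  (1 < k)%N ->
  (always_winnable k arc <->
   forall x : V, always_winnable k (induced_arc arc (strong_comp arc x))).
Proof.
move=> _; rewrite always_winnable_solvable.
split=> [solV x | AWC].
  by apply/induced_always_winnable; exact: solvable_strong_comp.
apply: solvable_comp_closed => [x | y z _ _]; last by rewrite in_setT.
exact/induced_always_winnable.
Qed.
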